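(* Let $n\ge 3$. The spectral radius of the super compacted matrix $\mathsf{SC}_n$ is the largest real root of the polynomial \[ Q_n(x) = x^{n} - 2(n-1)\sum_{j=1}^{n-1} x^{j} + 1. \]
   Context: The super compacted matrix of rank $n$ is the $n\times n$ matrix $\mathsf{SC}_n=(s_{ij})$ with: $s_{ij}=1$ if ($i\le n-2$ and $j=i+1$) or $i=n$; $s_{ij}=2$ if $i=n-2$ and $j=n$; $s_{ij}=2n-3$ if $i=n-1$ and $j<n$; $s_{ij}=2n-4$ if $i=n-1$ and $j=n$; $s_{ij}=0$ otherwise. *)

From mathcomp Require Import all_boot all_order all_algebra all_field.
Set Implicit Arguments. Unset Strict Implicit. Unset Printing Implicit Defensive.
Import Order.TTheory GRing.Theory Num.Theory.
Local Open Scope ring_scope.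

(* Super compacted matrix SC_n over the algebraic complex numbers algC.
   Row/column index i : 'I_n corresponds to the paper's 1-based index i+1. *)
Definition SC (n : nat) : 'M[algC]_n :=
  \matrix_(i < n, j < n)
    let a := i.+1 in let b := j.+1 in
    if ((a <= n - 2)%N && (b == a.+1)) || (a == n) then 1
    else if (a == n - 2)%N && (b == n) then 2
    else if (a == n - 1)%N && (b < n)%N then ((2 * n - 3)%N)%:R
    else if (a == n - 1)%N && (b == n) then ((2 * n - 4)%N)%:R
    else 0.

Definition Qpoly (n : nat) : {poly algC} :=
  'X^n - ((2 * (n - 1))%N)%:R *: (\sum_(1 <= j < n) 'X^j) + 1.

Definition is_spectral_radius (n : nat) (A : 'M[algC]_n) (r : algC) : Prop :=
  (exists2 l : algC, eigenvalue A l & `|l| = r) /\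
  (forall mu : algC, eigenvalue A mu -> `|mu| <= r).

Definition is_largest_real_root (p : {poly algC}) (r : algC) : Prop :=
  [/\ r \is Num.real, root p r &
      forall x : algC, x \is Num.real -> root p x -> x <= r].

From mathcomp Require Import all_boot all_order all_algebra all_field.
From mathcomp Require Import ring lra zify.
Import Order.TTheory GRing.Theory Num.Theory.
Set Implicit Arguments. Unset Strict Implicit. Unset Printing Implicit Defensive.
Local Open Scope ring_scope.

(* Write n = m + 3 and G(x) = 1 + x + ... + x^(n-2).  For every x,
   the vector v(x) with coordinates (x + 1) x^k (0 <= k <= n - 3),
   (x + 1) x^(n-2) - 2 G(x) and G(x) satisfies SC_n v(x) = x v(x) in every row
   except the penultimate one, where the two sides differ by Q_n(x).  So each root
   x <> -1 of Q_n is an eigenvalue.  Since Q_n(3) < 0 <= Q_n(2n - 1), Q_n has a real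
   root r >= 3, and v(r) is then entrywise positive.  For the nonnegative matrix
   SC_n a positive eigenvector bounds every eigenvalue: if u SC_n = mu u, weighting
   |u| by v(r) gives |mu| <= r.  Hence r is the spectral radius, and every real
   root of Q_n, being -1 or an eigenvalue, is at most r. *)

Lemma char_poly_trmx (F : fieldType) n (A : 'M[F]_n) : char_poly A^T = char_poly A.
Proof.
rewrite /char_poly -det_tr; congr (\det _); apply/matrixP => i j.
by rewrite !mxE; case: eqP => [->|]; case: eqP => // ->.
Qed.

Lemma eigenvalue_col (F : fieldType) n (A : 'M[F]_n) (v : 'cV_n) a :
  A *m v = a *: v -> v != 0 -> eigenvalue A a.
Proof.
move=> Av v_neq0; rewrite eigenvalue_root_char -char_poly_trmx -eigenvalue_root_char.
apply/eigenvalueP; exists v^T; last by rewrite trmx_eq0.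
by rewrite -trmx_mul Av linearZ.
Qed.

Section PositiveEigenvector.

Variables (C : numFieldType) (N : nat) (A : 'M[C]_N) (p : 'cV[C]_N) (r : C).
Hypotheses (A_ge0 : forall i j, 0 <= A i j) (p_gt0 : forall i, 0 < p i 0).
Hypothesis Ap : A *m p = r *: p.

Lemma weighted_norm_gt0 (u : 'rV[C]_N) : u != 0 -> 0 < \sum_j `|u 0 j| * p j 0.
Proof.
move=> u_neq0; have /existsP [j uj_neq0] : [exists j, u 0 j != 0].
  apply: contraNT u_neq0 => /existsPn u0.
  by apply/eqP/rowP => j; rewrite mxE; apply/eqP/negbNE/u0.
rewrite (bigD1 j) //= ltr_pwDl ?mulr_gt0 ?normr_gt0 //.
by apply: sumr_ge0 => i _; rewrite mulr_ge0 ?normr_ge0 ?ltW.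
Qed.

Lemma weighted_norm_mulmx (u : 'rV[C]_N) :
  \sum_j `|(u *m A) 0 j| * p j 0 <= r * \sum_j `|u 0 j| * p j 0.
Proof.
have -> : r * \sum_j `|u 0 j| * p j 0 = \sum_j \sum_i `|u 0 i| * A i j * p j 0.
  rewrite exchange_big big_distrr; apply: eq_bigr => i _ /=.
  have := congr1 (fun M : 'cV_N => M i 0) Ap; rewrite !mxE => /= Api.
  by rewrite mulrCA -Api big_distrr; apply: eq_bigr => j _; rewrite /= mulrA.
apply: ler_sum => j _; rewrite -big_distrl ler_wpM2r ?(ltW (p_gt0 j)) // mxE.
apply: le_trans (ler_norm_sum _ _ _) _; apply: ler_sum => i _.
by rewrite normrM (ger0_norm (A_ge0 i j)).
Qed.

Lemma norm_eigenvalue_le mu : eigenvalue A mu -> `|mu| <= r.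
Proof.
case/eigenvalueP => u uA u_neq0.
rewrite -(ler_pM2r (weighted_norm_gt0 u_neq0)).
apply: le_trans (weighted_norm_mulmx u); rewrite big_distrr /= le_eqVlt.
by apply/orP; left; apply/eqP/eq_bigr => j _; rewrite uA mxE normrM mulrA.
Qed.

End PositiveEigenvector.

Definition Qp (R : nzRingType) n : {poly R} :=
  'X^n - ((2 * (n - 1))%N)%:R *: (\sum_(1 <= j < n) 'X^j) + 1.

Lemma map_Qp (R S : nzRingType) (f : {rmorphism R -> S}) n :
  map_poly f (Qp R n) = Qp S n.
Proof.
rewrite /Qp rmorphD rmorphB rmorph1 /= map_polyZ rmorph_nat map_polyXn rmorph_sum.
by congr (_ - _ *: _ + _); apply: eq_bigr => j _; rewrite /= map_polyXn.
Qed.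

Lemma horner_Qp (R : comNzRingType) n (x : R) :
  (Qp R n.+1).[x] = x ^+ n.+1 - (2 * n)%:R * (\sum_(i < n.+1) x ^+ i - 1) + 1.
Proof.
rewrite /Qp !hornerE horner_sum subSS subn0 big_add1 /= big_mkord big_ord_recl.
rewrite expr0 [1 + _]addrC addrK; congr (_ - _ * _ + _).
by apply: eq_bigr => i _; rewrite hornerXn.
Qed.

Lemma Qp_at3_le0 (R : realFieldType) m : (Qp R m.+3).[3] <= 0.
Proof.
rewrite horner_Qp; have := subrX1 (3 : R) m.+3.
set G := \sum_(i < _) _; set c := (2 * m.+2)%:R.
have c_ge4 : 4 <= c by rewrite ler_nat; lia.
have Z_ge27 : 27 <= (3 : R) ^+ m.+3.
  have : 1 <= (3 : R) ^+ m by apply: exprn_ege1; lra.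
  by rewrite !exprS; lra.
move=> geom_G; have G_ge1 : 1 <= G by lra.
have : 0 <= (c - 4) * (G - 1) by rewrite mulr_ge0 // subr_ge0.
nra.
Qed.

Lemma Qp_at2n1_ge0 (R : realFieldType) m : 0 <= (Qp R m.+3).[(2 * m.+2).+1%:R].
Proof.
rewrite horner_Qp; have := subrX1 ((2 * m.+2).+1%:R : R) m.+3.
rewrite -natr1 addrK; set c := (2 * m.+2)%:R; set G := \sum_(i < _) _.
have c_ge0 : 0 <= c by [].
move=> cG; nra.
Qed.

Lemma Qp_root_ge3 (R : rcfType) m : exists2 r : R, 3 <= r & root (Qp R m.+3) r.
Proof.
have le_3c : 3 <= (2 * m.+2).+1%:R :> R by rewrite ler_nat; lia.
have Qp_sign : (Qp R m.+3).[3] <= 0 <= (Qp R m.+3).[(2 * m.+2).+1%:R].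
  by apply/andP; split; [exact: Qp_at3_le0 | exact: Qp_at2n1_ge0].
have [r /andP[r_ge3 _] Qr] := poly_ivt le_3c Qp_sign.
by exists r.
Qed.

Definition sc (R : nzRingType) m (i j : nat) : R :=
  if (i < m)%N then (if j == i.+1 then 1 else 0)
  else if i == m then (if j == m.+1 then 1 else if j == m.+2 then 2 else 0)
  else if i == m.+1 then (if j == m.+2 then (2 * m + 2)%:R else (2 * m + 3)%:R)
  else 1.

Lemma SC_entry m (i j : 'I_m.+3) : SC m.+3 i j = sc algC m i j.
Proof.
rewrite mxE /sc; have := ltn_ord i; have := ltn_ord j.
move: (nat_of_ord i) (nat_of_ord j) => a b hb ha.
have -> : (m.+3 - 2 = m.+1)%N by lia.
have -> : (m.+3 - 1 = m.+2)%N by lia.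
have -> : (2 * m.+3 - 3 = 2 * m + 3)%N by lia.
have -> : (2 * m.+3 - 4 = 2 * m + 2)%N by lia.
by repeat case: ifP => ?; try lia.
Qed.

Lemma SC_ge0 m (i j : 'I_m.+3) : 0 <= SC m.+3 i j.
Proof. by rewrite SC_entry /sc; repeat case: ifP => _; rewrite ?ler0n ?ler01. Qed.

Section SCEigenvector.

Variables (R : comNzRingType) (m : nat) (x : R).

Local Notation S := (\sum_(j < m.+1) x ^+ j).
Local Notation Y := (x ^+ m.+1).

Definition sc_vec (k : nat) : R :=
  if (k <= m)%N then (x + 1) * x ^+ k
  else if k == m.+1 then (x + 1) * Y - 2 * (S + Y)
  else S + Y.

Lemma sc_vec_mul_split i :
  \sum_(j < m.+3) sc R m i j * sc_vec j =
  \sum_(j < m.+1) sc R m i j * ((x + 1) * x ^+ j)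
  + sc R m i m.+1 * ((x + 1) * Y - 2 * (S + Y)) + sc R m i m.+2 * (S + Y).
Proof.
rewrite 2!big_ord_recr /= /sc_vec ltnn eqxx ltnNge leqnSn /= gtn_eqF //.
by congr (_ + _ + _); apply: eq_bigr => j _; rewrite -ltnS ltn_ord.
Qed.

Lemma sum_sc_const_block i : (m <= i)%N ->
  \sum_(j < m.+1) sc R m i j * ((x + 1) * x ^+ j) = sc R m i 0 * ((x + 1) * S).
Proof.
move=> le_mi; rewrite big_distrr big_distrr; apply: eq_bigr => j _; congr (_ * _).
by rewrite /sc; have := ltn_ord j; repeat case: ifP => ?; try lia.
Qed.

Lemma sc_vec_row_shift i : (i < m)%N ->
  \sum_(j < m.+3) sc R m i j * sc_vec j = x * sc_vec i.
Proof.
move=> lt_im; rewrite sc_vec_mul_split /sc lt_im.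
have -> : (m.+1 == i.+1) = false by lia.
have -> : (m.+2 == i.+1) = false by lia.
rewrite !mul0r !addr0 (eq_bigr (fun j : 'I_m.+1 => if (j : nat) == i.+1 then (x + 1) * x ^+ j else 0)).
  rewrite -big_mkcond (big_ord1_eq _ (fun j => (x + 1) * x ^+ j)).
  by rewrite ltnS lt_im /sc_vec ltnW // exprS mulrCA.
by move=> j _; case: eqP; rewrite ?mul1r ?mul0r.
Qed.

Lemma sc_vec_row_m : \sum_(j < m.+3) sc R m m j * sc_vec j = x * sc_vec m.
Proof.
rewrite sc_vec_mul_split sum_sc_const_block // /sc /sc_vec.
repeat case: ifP => ?; try lia.
by set s := \sum_(j < _) _; rewrite exprS; ring.
Qed.

Lemma sc_vec_row_last : \sum_(j < m.+3) sc R m m.+2 j * sc_vec j = x * sc_vec m.+2.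
Proof.
rewrite sc_vec_mul_split sum_sc_const_block ?leqW // /sc /sc_vec.
repeat case: ifP => ?; try lia.
by set s := \sum_(j < _) _; ring.
Qed.

Lemma sc_vec_row_Qp :
  \sum_(j < m.+3) sc R m m.+1 j * sc_vec j = x * sc_vec m.+1 - (Qp R m.+3).[x].
Proof.
rewrite sc_vec_mul_split sum_sc_const_block ?leqW // /sc /sc_vec.
repeat case: ifP => ?; try lia.
rewrite horner_Qp (big_ord_recr m.+2) (big_ord_recr m.+1) /=.
rewrite (_ : 2 * m.+2 = 2 * m + 4)%N; last by lia.
rewrite (exprS x m.+2) (exprS x m.+1) !natrD.
have := subrX1 x m.+1; set s := \sum_(j < _) _; set y := x ^+ m.+1.
by move/eqP; rewrite subr_eq => /eqP ->; ring.
Qed.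

End SCEigenvector.

Lemma sc_vec_gt0 (R : realFieldType) m (x : R) k : 3 <= x -> 0 < sc_vec m x k.
Proof.
move=> x_ge3; rewrite /sc_vec; case: ifP => _.
  by rewrite mulr_gt0 ?exprn_gt0 //; lra.
have := subrX1 x m.+1; set s := \sum_(j < _) _; set y := x ^+ m.+1.
move/eqP; rewrite subr_eq => /eqP y_def.
have s_ge0 : 0 <= s by apply: sumr_ge0 => j _; apply: exprn_ge0; lra.
case: ifP => _; last by rewrite y_def; nra.
have : 0 <= s * ((x - 3) * (x + 1)) by rewrite !mulr_ge0 //; lra.
by rewrite y_def; nra.
Qed.

Lemma rmorph_sc_vec (R S : comNzRingType) (f : {rmorphism R -> S}) m x k :
  f (sc_vec m x k) = sc_vec m (f x) k.
Proof.
have f_geom n : f (\sum_(j < n) x ^+ j) = \sum_(j < n) f x ^+ j.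
  by rewrite rmorph_sum; apply: eq_bigr => j _; rewrite rmorphXn.
rewrite /sc_vec; case: ifP => _; first by rewrite rmorphM rmorphD rmorph1 rmorphXn.
case: ifP => _; last by rewrite rmorphD f_geom rmorphXn.
by rewrite rmorphB !rmorphM rmorphD rmorph1 rmorph_nat rmorphD f_geom !rmorphXn.
Qed.

Definition sc_eigvec (R : comNzRingType) m (x : R) : 'cV[R]_m.+3 :=
  \col_(i < m.+3) sc_vec m x i.

Lemma sc_eigvec_neq0 (F : fieldType) m (x : F) : x != -1 -> sc_eigvec m x != 0.
Proof.
move=> x_neq; apply: contraNneq x_neq => /colP /(_ ord0).
by rewrite !mxE /sc_vec /= expr0 mulr1 => /eqP; rewrite addr_eq0.
Qed.

Lemma SC_mul_sc_eigvec m (x : algC) :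
  root (Qpoly m.+3) x -> SC m.+3 *m sc_eigvec m x = x *: sc_eigvec m x.
Proof.
move=> /eqP Qx; apply/colP => i; rewrite !mxE.
rewrite (eq_bigr (fun j : 'I_m.+3 => sc algC m i j * sc_vec m x j)); last first.
  by move=> j _; rewrite SC_entry mxE.
have : (i < m)%N \/ i = m :> nat \/ i = m.+1 :> nat \/ i = m.+2 :> nat.
  by have := ltn_ord i; lia.
case=> [lt_im | [-> | [-> | ->]]].
- exact: sc_vec_row_shift.
- exact: sc_vec_row_m.
- by rewrite sc_vec_row_Qp Qx subr0.
- exact: sc_vec_row_last.
Qed.

Unset Implicit Arguments.
Theorem proposition6p3 (n : nat) (hn : (3 <= n)%N) :
  exists r : algC, is_spectral_radius (SC n) r /\ is_largest_real_root (Qpoly n) r.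
Proof.
case: n hn => [|[|[|m]]] // _.
have [rR rR_ge3 QrR] := Qp_root_ge3 algR m; set r := algRval rR.
have Qr : root (Qpoly m.+3) r by rewrite -(fmorph_root algRval) map_Qp in QrR.
have r_ge3 : 3 <= r by rewrite -(rmorph_nat algRval).
have r_ge0 : 0 <= r by apply: le_trans r_ge3.
have eigvec_gt0 i : 0 < sc_eigvec m r i 0.
  by rewrite mxE -rmorph_sc_vec; exact: (sc_vec_gt0 m i rR_ge3).
have Ar := SC_mul_sc_eigvec Qr.
have spectrum_le := norm_eigenvalue_le (@SC_ge0 m) eigvec_gt0 Ar.
exists r; split; first split.
- exists r; last by rewrite ger0_norm.
  apply: eigenvalue_col Ar (sc_eigvec_neq0 m _).
  by apply: contraTneq r_ge0 => ->; rewrite oppr_ge0 ler10.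
- by move=> mu /spectrum_le.
split => [||x xR Qx]; [exact: ger0_real | exact: Qr |].
have [-> | x_neq] := eqVneq x (-1); first by rewrite (le_trans _ r_ge0) // oppr_le0.
have /spectrum_le := eigenvalue_col (SC_mul_sc_eigvec Qx) (sc_eigvec_neq0 m x_neq).
exact: le_trans (real_ler_norm xR).
Qed.
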